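(* Let $k\ge1$, $1\le m\le d$, let $p,q\in[1,\infty]$ with $1/p+1/q=1$. Let $w\in\Lambda^m_{\mathbb{R}^k}(\mathbb{R}^d)$ have components $w_i=\langle w;\cdot,e_i\rangle\in\Lambda^m(\mathbb{R}^d)$, $i=1,\dots,k$. If $p\in(1,\infty]$ then \[ \max_{1\le i\le k}|w_i|_{\mathrm{com}}\le|w|_{\mathrm{com},p}\le\Big(\sum_{i=1}^k|w_i|_{\mathrm{com}}^q\Big)^{1/q}, \] while $|w|_{\mathrm{com},1}=\max_{1\le i\le k}|w_i|_{\mathrm{com}}$. Let $v\in\Lambda_{m,\mathbb{R}^k}(\mathbb{R}^d)$ have components $v_1,\dots,v_k\in\Lambda_m(\mathbb{R}^d)$. If $1\le p<\infty$ then \[ \Big(\sum_{i=1}^k|v_i|^p\Big)^{1/p}\le\Big(\sum_{i=1}^k|v_i|_{\mathrm{mass}}^p\Big)^{1/p}\le|v|_{\mathrm{mass},p}\le\sum_{i=1}^k|v_i|_{\mathrm{mass}}, \] while for $p=\infty$, \[ \max_{i}|v_i|\le\max_i|v_i|_{\mathrm{mass}}\le|v|_{\mathrm{mass},\infty}\le\sum_{i=1}^k|v_i|_{\mathrm{mass}}. \]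
   Context: $\Lambda^m_{\mathbb{R}^k}(\mathbb{R}^d)$: $(\mathbb{R}^k)^*$-valued $m$-covectors $w=\sum_iw_ie_i^*$; $\Lambda_{m,\mathbb{R}^k}(\mathbb{R}^d)$: $\mathbb{R}^k$-valued $m$-vectors $v=\sum_iv_ie_i$; pairing $\langle w,v\rangle=\sum_i\langle w_i,v_i\rangle$. $|w|_{\mathrm{com},p}:=\sup\{\|(\langle w_1,\tau\rangle,\dots,\langle w_k,\tau\rangle)\|_q:\tau\text{ simple }m\text{-vector},|\tau|\le1\}$, $|v|_{\mathrm{mass},p}:=\sup\{\langle w,v\rangle:|w|_{\mathrm{com},p}\le1\}$, where $\|\cdot\|_q$ is the $\ell^q$-norm on $\mathbb{R}^k$. For classical $\sigma\in\Lambda^m(\mathbb{R}^d)$, $\tau\in\Lambda_m(\mathbb{R}^d)$: $|\sigma|_{\mathrm{com}}=\sup\{\langle\sigma,t\rangle:t\text{ simple},|t|\le1\}$, $|\tau|_{\mathrm{mass}}=\sup\{\langle\sigma,\tau\rangle:|\sigma|_{\mathrm{com}}\le1\}$; $|\cdot|$ is the Euclidean norm. *)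

From HB Require Import structures.
From mathcomp Require Import all_boot all_order all_algebra.
From mathcomp Require Import all_classical all_reals.
From mathcomp Require Import ereal exp.
Set Implicit Arguments. Unset Strict Implicit. Unset Printing Implicit Defensive.
Import Order.TTheory GRing.Theory Num.Theory.
Local Open Scope ring_scope.
Local Open Scope classical_set_scope.

(* Strictly increasing multi-indices I = (i_1 < ... < i_m), i_j in 'I_d:
   they index the standard basis e_I = e_{i_1} /\ ... /\ e_{i_m} of
   Lambda_m(R^d), and the dual basis e_I^* of Lambda^m(R^d). *)
Definition incr (m d : nat) (I : {ffun 'I_m -> 'I_d}) : bool :=
  [forall i : 'I_m, forall j : 'I_m, (i < j)%N ==> (I i < I j)%N].
Definition mindex (m d : nat) := {I : {ffun 'I_m -> 'I_d} | incr I}.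

(* m-vectors and m-covectors: coordinates in the (dual) standard basis. *)
Definition mvec (R : realType) (m d : nat) := mindex m d -> R.
Definition mcovec (R : realType) (m d : nat) := mindex m d -> R.

Definition pairing (R : realType) m d (s : mcovec R m d) (t : mvec R m d) : R :=
  \sum_(I : mindex m d) s I * t I.

Definition enorm (R : realType) m d (t : mvec R m d) : R :=
  Num.sqrt (\sum_(I : mindex m d) t I ^+ 2).

(* tau is simple: tau = v_1 /\ ... /\ v_m, where v_i is row i of M;
   its e_I-coordinate is the minor det [v_i(I_j)]_{i,j}. *)
Definition simple (R : realType) m d (t : mvec R m d) : Prop :=
  exists M : 'M[R]_(m, d),
    forall I : mindex m d, t I = \det (\matrix_(i < m, j < m) M i (val I j)).

Definition comass (R : realType) m d (s : mcovec R m d) : R :=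
  sup [set pairing s t | t in [set t : mvec R m d | simple t /\ enorm t <= 1]].

Definition mass (R : realType) m d (t : mvec R m d) : R :=
  sup [set pairing s t | s in [set s : mcovec R m d | comass s <= 1]].

Definition lqnorm (R : realType) (k : nat) (q : \bar R) (x : 'I_k -> R) : R :=
  match q with
  | EFin r => (\sum_(i < k) `|x i| `^ r) `^ r^-1
  | _ => \big[Num.max/0]_(i < k) `|x i|
  end.

Definition conjexp (R : realType) (p : \bar R) : \bar R :=
  match p with
  | EFin r => if r == 1 then +oo%E else (r / (r - 1))%:E
  | _ => 1%E
  end.

Definition comass_p (R : realType) k m d (p : \bar R)
    (w : 'I_k -> mcovec R m d) : R :=
  sup [set lqnorm (conjexp p) (fun i => pairing (w i) t)
      | t in [set t : mvec R m d | simple t /\ enorm t <= 1]].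

Definition pairingV (R : realType) k m d (w : 'I_k -> mcovec R m d)
    (v : 'I_k -> mvec R m d) : R :=
  \sum_(i < k) pairing (w i) (v i).

Definition mass_p (R : realType) k m d (p : \bar R)
    (v : 'I_k -> mvec R m d) : R :=
  sup [set pairingV w v
      | w in [set w : 'I_k -> mcovec R m d | comass_p p w <= 1]].

(* A simple m-vector of norm at most 1 pairs with w into the vector
   (<w_i, t>)_i, whose entries are bounded coordinatewise by the comasses
   |w_i|_com; comparing l^q norms gives the upper comass bound, and bounding
   one coordinate by the l^q norm gives the lower one.  A competitor w of
   comass_p at most 1 has components of comass at most 1, so
   |v|_mass,p <= sum_i |v_i|_mass.  Conversely, for nonnegative weights a in
   the unit ball of l^q and near-optimal covectors s_i for the masses of the
   v_i, the family (a_i s_i)_i has comass_p at most 1, whence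
   sum_i a_i |v_i|_mass <= |v|_mass,p; the supremum over such a (attained by
   the extremal weights of Holder's inequality) is the l^p norm of the
   masses.  Finally |t| <= |t|_mass because t / |t| has comass at most 1. *)

From HB Require Import structures.
From mathcomp Require Import all_boot all_order all_algebra.
From mathcomp Require Import all_classical all_reals.
From mathcomp Require Import ereal exp.
Import Order.TTheory GRing.Theory Num.Theory.
Local Open Scope ring_scope.
Local Open Scope classical_set_scope.

Section MultiIndex.
Context {m d : nat}.
Implicit Types I J : mindex m d.

Lemma mindex_ltn I (i j : 'I_m) : (i < j)%N -> (val I i < val I j)%N.
Proof. by move=> ij; have /forallP/(_ i)/forallP/(_ j)/implyP := valP I; exact. Qed.

Lemma mindex_inj I : injective (val I).
Proof.
move=> i j eqIij.
by case: (ltngtP i j) => [/(mindex_ltn I)|/(mindex_ltn I)|/val_inj //]; rewrite eqIij ltnn.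
Qed.

Lemma mindex_sorted I : sorted (fun a b : 'I_d => (a < b)%N) (codom (val I)).
Proof.
rewrite /codom /image_mem sorted_map.
apply: (@sub_sorted _ (relpre val ltn)); first exact: mindex_ltn.
by rewrite -sorted_map val_enum_ord iota_ltn_sorted.
Qed.

Lemma mindex_eq_sub I J : {subset codom (val J) <= codom (val I)} -> I = J.
Proof.
move=> sJI; have szIJ : (size (codom (val I)) <= size (codom (val J)))%N by rewrite !size_codom.
have uJ : uniq (codom (val J)) by rewrite (map_inj_uniq (mindex_inj J)) enum_uniq.
have [_ eqJI] := uniq_min_size uJ sJI szIJ.
apply/val_inj/(can_inj fgraphK)/val_inj; rewrite /= -!codom_ffun.
apply: irr_sorted_eq (mindex_sorted I) (mindex_sorted J) _ => [a b c|a|a].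
- exact: ltn_trans.
- exact: ltnn.
- by rewrite eqJI.
Qed.

End MultiIndex.

Section SimpleMvec.
Context {R : realType} {m d : nat}.
Implicit Types (t : mvec R m d) (J : mindex m d).

Definition basis_mvec J : mvec R m d := fun I => (I == J)%:R.

Lemma simple_basis_mvec J : simple (basis_mvec J).
Proof.
exists (\matrix_(i < m, l < d) (val J i == l)%:R) => I; rewrite /basis_mvec.
have [->|neqIJ] := eqVneq I J.
  rewrite (_ : \matrix_(i, j) _ = 1%:M) ?det1 //.
  by apply/matrixP => i j; rewrite !mxE (inj_eq (mindex_inj J)).
have [i notJiI] : exists i, val J i \notin codom (val I).
  apply/not_existsP => JI; case/eqP: neqIJ; apply: mindex_eq_sub => _ /codomP[i ->].
  by apply/negPn/negP; apply: JI.
rewrite (expand_det_row _ i) big1 // => j _; rewrite !mxE.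
by case: eqP notJiI => [->|_]; rewrite ?codom_f ?mul0r.
Qed.

Hypothesis m_gt0 : (0 < m)%N.

Lemma simple0 : simple (fun _ : mindex m d => 0 : R).
Proof.
exists 0 => I; rewrite (expand_det_row _ (Ordinal m_gt0)) big1 // => j _.
by rewrite !mxE mul0r.
Qed.

(* Negating one row of M negates every maximal minor. *)
Lemma simpleN t : simple t -> simple (fun I => - t I).
Proof.
case=> M tM; pose i0 := Ordinal m_gt0.
pose D : 'M[R]_m := diag_mx (\row_i (if i == i0 then -1 else 1)).
exists (D *m M) => I.
have -> : \matrix_(i, j) (D *m M) i (val I j) = D *m \matrix_(i, j) M i (val I j).
  by rewrite !mul_diag_mx; apply/matrixP => i j; rewrite !mxE.
rewrite tM det_mulmx det_diag (bigD1 i0) //= big1 ?mxE ?eqxx ?mulr1 ?mulN1r //.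
by move=> i /negbTE i_neq0; rewrite mxE i_neq0.
Qed.

End SimpleMvec.

Section LqNorm.
Context {R : realType} {k : nat}.
Implicit Types (x y : 'I_k -> R) (q : \bar R).

Lemma lqnorm_ge0 q x : 0 <= lqnorm q x.
Proof. by case: q => [r||]; rewrite /lqnorm ?powR_ge0 ?bigmax_ge_id. Qed.

Lemma lqnorm_fin r x : (forall i, 0 <= x i) ->
  lqnorm r%:E x = (\sum_i x i `^ r) `^ r^-1.
Proof. by move=> x_ge0; congr (_ `^ _); apply: eq_bigr => i _; rewrite ger0_norm. Qed.

Lemma lqnorm1 x : (forall i, 0 <= x i) -> lqnorm 1%:E x = \sum_i x i.
Proof.
move=> x_ge0; rewrite lqnorm_fin // invr1; under eq_bigr do rewrite powRr1 //.
by rewrite powRr1 // sumr_ge0.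
Qed.

Lemma lqnorm_pinfty x : (forall i, 0 <= x i) -> lqnorm +oo%E x = \big[Num.max/0]_i x i.
Proof. by move=> x_ge0; apply: eq_bigr => i _; rewrite ger0_norm. Qed.

Lemma ler_lqnorm q x y : (0 < q)%E -> (forall i, `|x i| <= `|y i|) ->
  lqnorm q x <= lqnorm q y.
Proof.
case: q => [r||] r_gt0 le_xy; rewrite /lqnorm; [|exact: le_bigmax2..].
rewrite lte_fin in r_gt0; have r_ge0 := ltW r_gt0.
apply: ge0_ler_powR; rewrite ?invr_ge0 ?nnegrE //.
- by apply: sumr_ge0 => i _; exact: powR_ge0.
- by apply: sumr_ge0 => i _; exact: powR_ge0.
- by apply: ler_sum => i _; apply: ge0_ler_powR; rewrite ?nnegrE.
Qed.

Lemma ler_abs_lqnorm q x i : (0 < q)%E -> `|x i| <= lqnorm q x.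
Proof.
case: q => [r||] r_gt0; rewrite /lqnorm; [|exact: le_bigmax..].
rewrite lte_fin in r_gt0; have r_ge0 := ltW r_gt0.
rewrite -[leLHS](powRr1 (normr_ge0 _)) -(mulfV (lt0r_neq0 r_gt0)) powRrM.
apply: ge0_ler_powR; rewrite ?invr_ge0 ?nnegrE ?powR_ge0 //.
- by apply: sumr_ge0 => j _; exact: powR_ge0.
- by rewrite (bigD1 i) //= lerDl; apply: sumr_ge0 => j _; exact: powR_ge0.
Qed.

Lemma lqnorm0 q : (0 < q)%E -> lqnorm q (fun _ : 'I_k => 0) = 0.
Proof.
move=> q_gt0; apply/le_anti; rewrite lqnorm_ge0 andbT.
case: q q_gt0 => [r||] //= r_gt0; rewrite /lqnorm /=.
  rewrite lte_fin in r_gt0.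
  by rewrite big1 ?powR0 ?invr_neq0 ?lt0r_neq0 // => i _; rewrite normr0 powR0 ?lt0r_neq0.
by apply: bigmax_le => // i _; rewrite normr0.
Qed.

End LqNorm.

Section ComassMass.
Context {R : realType} {m d : nat}.
Hypothesis m_gt0 : (0 < m)%N.
Implicit Types (t : mvec R m d) (s : mcovec R m d).

Definition unit_simple : set (mvec R m d) := [set t | simple t /\ enorm t <= 1].

Definition sqnorm t : R := \sum_I t I ^+ 2.

Lemma sqnorm_ge0 t : 0 <= sqnorm t.
Proof. by apply: sumr_ge0 => I _; rewrite sqr_ge0. Qed.

Lemma enorm_ge0 t : 0 <= enorm t.
Proof. exact: sqrtr_ge0. Qed.

Lemma sqr_enorm t : enorm t ^+ 2 = sqnorm t.
Proof. by rewrite sqr_sqrtr // sqnorm_ge0. Qed.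

Lemma unit_simple_sqnorm t : unit_simple t -> sqnorm t <= 1.
Proof.
by case=> _ t_le1; rewrite -sqr_enorm -(expr1n _ 2) ler_pXn2r ?nnegrE ?enorm_ge0.
Qed.

Lemma pairing_le_sqnorm s t : pairing s t <= (sqnorm s + sqnorm t) / 2.
Proof.
rewrite /pairing /sqnorm -big_split mulr_suml /=.
by apply: ler_sum => I _; exact: (leif_mean_square _ _).1.
Qed.

Lemma pairing0l t : pairing (fun _ => 0) t = 0.
Proof. by rewrite /pairing big1 // => I _; rewrite mul0r. Qed.

Lemma pairing0r s : pairing s (fun _ => 0) = 0.
Proof. by rewrite /pairing big1 // => I _; rewrite mulr0. Qed.

Lemma pairingNr s t : pairing s (fun I => - t I) = - pairing s t.
Proof. by rewrite /pairing -sumrN; apply: eq_bigr => I _; rewrite mulrN. Qed.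

Lemma pairingZl a s t : pairing (fun I => a * s I) t = a * pairing s t.
Proof. by rewrite /pairing mulr_sumr; apply: eq_bigr => I _; rewrite mulrA. Qed.

Lemma pairing_basis s J : pairing s (basis_mvec J) = s J.
Proof.
rewrite /pairing (bigD1 J) //= /basis_mvec eqxx mulr1 big1 ?addr0 // => I /negbTE->.
by rewrite mulr0.
Qed.

Lemma unit_simple0 : unit_simple (fun _ => 0).
Proof.
by split; [exact: simple0 | rewrite /enorm big1 ?sqrtr0 // => I _; rewrite expr0n].
Qed.

Lemma unit_simpleN t : unit_simple t -> unit_simple (fun I => - t I).
Proof.
case=> simple_t t_le1; split; first exact: simpleN.
by rewrite /enorm; under eq_bigr do rewrite sqrrN.
Qed.

Lemma unit_simple_basis J : unit_simple (basis_mvec J : mvec R m d).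
Proof.
split; first exact: simple_basis_mvec.
rewrite /enorm (bigD1 J) //= /basis_mvec eqxx expr1n big1 ?addr0 ?sqrtr1 //.
by move=> I /negbTE->; rewrite expr0n.
Qed.

Lemma has_sup_comass s : has_sup [set pairing s t | t in unit_simple].
Proof.
split; first by exists (pairing s (fun _ => 0)), (fun _ => 0); first exact: unit_simple0.
exists ((sqnorm s + 1) / 2) => _ [t /unit_simple_sqnorm t_le1 <-].
by apply: le_trans (pairing_le_sqnorm s t) _; rewrite ler_pM2r // lerD2l.
Qed.

Lemma comass_ge s {t} : unit_simple t -> `|pairing s t| <= comass s.
Proof.
move=> ut; have ub := sup_upper_bound (has_sup_comass s).
rewrite ler_norml lerNl -pairingNr !ub //; first by exists t.
by exists (fun I => - t I); first exact: unit_simpleN.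
Qed.

Lemma comass_le s C : (forall t, unit_simple t -> pairing s t <= C) -> comass s <= C.
Proof.
move=> s_leC; apply: ge_sup; first exact: (has_sup_comass s).1.
by move=> _ [t ut <-]; apply: s_leC.
Qed.

Lemma comass_ge0 s : 0 <= comass s.
Proof. by have := comass_ge s unit_simple0; rewrite pairing0r normr0. Qed.

Lemma comass0 : comass (fun _ : mindex m d => 0 : R) = 0.
Proof.
by apply/le_anti; rewrite comass_ge0 andbT; apply: comass_le => t _; rewrite pairing0l.
Qed.

Lemma abs_coord_le_comass s J : `|s J| <= comass s.
Proof. by rewrite -pairing_basis; apply: comass_ge; exact: unit_simple_basis. Qed.

Lemma has_sup_mass t : has_sup [set pairing s t | s in [set s | comass s <= 1]].
Proof.
split; first by exists (pairing (fun _ => 0) t), (fun _ => 0); rewrite //= comass0.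
exists (\sum_I `|t I|) => _ [s s_le1 <-]; apply: ler_sum => I _.
rewrite (le_trans (ler_norm _)) // normrM ler_piMl //.
exact: le_trans (abs_coord_le_comass s I) s_le1.
Qed.

Lemma mass_ge t s : comass s <= 1 -> pairing s t <= mass t.
Proof. by move=> s_le1; apply: sup_upper_bound (has_sup_mass t) _ _; exists s. Qed.

Lemma mass_ge0 t : 0 <= mass t.
Proof. by rewrite -(pairing0l t) mass_ge // comass0. Qed.

(* The competitor is t / |t|, whose comass is at most 1 by the AM-GM bound on the pairing. *)
Lemma enorm_le_mass t : enorm t <= mass t.
Proof.
have [->|t_neq0] := eqVneq (enorm t) 0; first exact: mass_ge0.
pose s : mcovec R m d := fun I => (enorm t)^-1 * t I.
have sqnorm_s : sqnorm s = 1.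
  rewrite /sqnorm; under eq_bigr do rewrite exprMn.
  by rewrite -mulr_sumr -/(sqnorm t) -sqr_enorm exprVn mulVf // sqrf_eq0.
have s_le1 : comass s <= 1.
  apply: comass_le => t' /unit_simple_sqnorm t'_le1.
  by apply: le_trans (pairing_le_sqnorm s t') _; rewrite sqnorm_s ler_pdivrMr // mul1r lerD2l.
suff -> : enorm t = pairing s t by exact: mass_ge.
rewrite pairingZl /pairing -/(sqnorm t) -sqr_enorm expr2 mulKf //.
Qed.

Lemma lqnorm_enorm_le_lqnorm_mass {k : nat} {q : \bar R} (v : 'I_k -> mvec R m d) :
  (0 < q)%E -> lqnorm q (fun i => enorm (v i)) <= lqnorm q (fun i => mass (v i)).
Proof.
move=> q_gt0; apply: ler_lqnorm => // i.
by rewrite !ger0_norm ?enorm_ge0 ?mass_ge0 ?enorm_le_mass.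
Qed.

End ComassMass.

Lemma conjexp_gt0 {R : realType} {p : \bar R} : (1 <= p)%E -> (0 < conjexp p)%E.
Proof.
case: p => [r||] //=; rewrite lee_fin => r_ge1.
have [//|r_neq1] := eqVneq r 1.
have r_gt1 : 1 < r by rewrite lt_neqAle eq_sym r_neq1.
by rewrite lte_fin divr_gt0 ?subr_gt0 // (lt_trans ltr01).
Qed.

Section LqDuality.
Context {R : realType} {k : nat}.
Implicit Types (x a : 'I_k -> R).

(* Equality case of Holder's inequality: a_i = (x_i / |x|_r)^(r-1). *)
Lemma lqnorm_dual_attained r x : 1 < r -> (forall i, 0 <= x i) ->
  exists a, [/\ forall i, 0 <= a i, lqnorm (r / (r - 1))%:E a <= 1
              & lqnorm r%:E x = \sum_i a i * x i].
Proof.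
move=> r_gt1 x_ge0; have r_gt0 : 0 < r := lt_trans ltr01 r_gt1.
have r1_gt0 : 0 < r - 1 by rewrite subr_gt0.
rewrite lqnorm_fin //; set S := \sum_i _; set N := S `^ r^-1.
have S_ge0 : 0 <= S by apply: sumr_ge0 => i _; exact: powR_ge0.
have [S0|S_neq0] := eqVneq S 0.
  exists (fun _ => 0); split => //; first by rewrite lqnorm0 // lte_fin divr_gt0.
  by rewrite /N S0 powR0 ?invr_neq0 ?lt0r_neq0 // big1 // => i _; rewrite mul0r.
have N_gt0 : 0 < N by rewrite powR_gt0 // lt0r S_neq0.
have NrS : N `^ r = S by rewrite -powRrM mulVf ?lt0r_neq0 // powRr1.
have xN_ge0 i : 0 <= x i / N by rewrite divr_ge0 // ltW.
have sum_xNr : \sum_i (x i / N) `^ r = 1.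
  have xNr i : (x i / N) `^ r = x i `^ r / S.
    have N_ge0 := ltW N_gt0.
    by rewrite powRM ?invr_ge0 // -powR_inv1 // -powRrM mulN1r powRN NrS.
  by under eq_bigr do rewrite xNr; rewrite -mulr_suml mulfV.
exists (fun i => (x i / N) `^ (r - 1)); split => [i||]; first exact: powR_ge0.
  rewrite lqnorm_fin => [|i]; last exact: powR_ge0.
  under eq_bigr do rewrite -powRrM (mulrC (r - 1)) divfK ?lt0r_neq0 //.
  by rewrite sum_xNr powR1.
rewrite -[LHS]mulr1 -[X in N * X]sum_xNr mulr_sumr; apply: eq_bigr => i _.
by rewrite -mulr_powRB1 // mulrA (mulrC N) divfK ?lt0r_neq0 // mulrC.
Qed.

Lemma lqnorm_le_dual p x C : (1 <= p)%E -> (forall i, 0 <= x i) ->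
  (forall a, (forall i, 0 <= a i) -> lqnorm (conjexp p) a <= 1 -> \sum_i a i * x i <= C) ->
  lqnorm p x <= C.
Proof.
move=> p_ge1 x_ge0 dualC.
have C_ge0 : 0 <= C.
  have := dualC (fun _ => 0) (fun=> lexx 0); under eq_bigr do rewrite mul0r.
  by rewrite big1_eq lqnorm0 ?conjexp_gt0 // ler01; apply.
case: p p_ge1 dualC => [r||] //; rewrite ?lee_fin => r_ge1 dualC.
- have [r1|r_neq1] := eqVneq r 1.
    rewrite r1 lqnorm1 //.
    have := dualC (fun _ => 1) (fun=> ler01); under eq_bigr do rewrite mul1r.
    rewrite /conjexp r1 eqxx lqnorm_pinfty => [|i]; last exact: ler01.
    by apply; apply: bigmax_le.
  have r_gt1 : 1 < r by rewrite lt_neqAle eq_sym r_neq1.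
  have [a [a_ge0 a_le1 ->]] := lqnorm_dual_attained r x r_gt1 x_ge0.
  by apply: dualC => //; rewrite /conjexp (negbTE r_neq1).
- rewrite lqnorm_pinfty //; apply: bigmax_le => // i _.
  pose e j : R := (j == i)%:R.
  have e_ge0 j : 0 <= e j by rewrite ler0n.
  have sum_e y : \sum_j e j * y j = y i.
    rewrite (bigD1 i) //= big1 => [|j /negbTE j_neq_i]; rewrite /e.
      by rewrite eqxx mul1r addr0.
    by rewrite j_neq_i mul0r.
  have := dualC e e_ge0; rewrite sum_e lqnorm1 //.
  by under eq_bigr do rewrite -[e _]mulr1; rewrite sum_e; apply.
Qed.

End LqDuality.

Section VectorValued.
Context {R : realType} {k m d : nat} {p : \bar R}.
Hypotheses (m_gt0 : (0 < m)%N) (p_ge1 : (1 <= p)%E).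
Implicit Types (w : 'I_k -> mcovec R m d) (v : 'I_k -> mvec R m d).

Let q_gt0 : (0 < conjexp p)%E := conjexp_gt0 p_ge1.

Lemma has_sup_comass_p w :
  has_sup [set lqnorm (conjexp p) (fun i => pairing (w i) t) | t in unit_simple].
Proof.
split; first by exists (lqnorm (conjexp p) (fun i => pairing (w i) (fun _ => 0))), (fun _ => 0);
  first exact: unit_simple0.
exists (lqnorm (conjexp p) (fun i => comass (w i))) => _ [t ut <-].
by apply: ler_lqnorm => // i; rewrite (ger0_norm (comass_ge0 m_gt0 _)) comass_ge.
Qed.

Lemma comass_p_ge w {t} : unit_simple t ->
  lqnorm (conjexp p) (fun i => pairing (w i) t) <= comass_p p w.
Proof. by move=> ut; apply: sup_upper_bound (has_sup_comass_p w) _ _; exists t. Qed.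

Lemma comass_p_le w C :
  (forall t, unit_simple t -> lqnorm (conjexp p) (fun i => pairing (w i) t) <= C) ->
  comass_p p w <= C.
Proof.
move=> w_leC; apply: ge_sup; first exact: (has_sup_comass_p w).1.
by move=> _ [t ut <-]; apply: w_leC.
Qed.

Lemma comass_le_comass_p w i : comass (w i) <= comass_p p w.
Proof.
apply: (comass_le m_gt0) => t ut; apply: le_trans (ler_norm _) _.
exact: le_trans (ler_abs_lqnorm _ (fun j => pairing (w j) t) i q_gt0) (comass_p_ge w ut).
Qed.

Lemma comass_p_ge0 w : 0 <= comass_p p w.
Proof. exact: le_trans (lqnorm_ge0 _ _) (comass_p_ge w (unit_simple0 m_gt0)). Qed.

Lemma bigmax_comass_le_comass_p w : \big[Num.max/0]_i comass (w i) <= comass_p p w.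
Proof. by apply: bigmax_le => [|i _]; [exact: comass_p_ge0 | exact: comass_le_comass_p]. Qed.

Lemma comass_p_le_lqnorm_comass w : comass_p p w <= lqnorm (conjexp p) (fun i => comass (w i)).
Proof.
apply: comass_p_le => t ut; apply: ler_lqnorm => // i.
by rewrite (ger0_norm (comass_ge0 m_gt0 _)) comass_ge.
Qed.

Lemma comass_p0 : comass_p p (fun (_ : 'I_k) (_ : mindex m d) => 0 : R) = 0.
Proof.
apply/le_anti; rewrite comass_p_ge0 andbT.
by apply: comass_p_le => t _; under eq_fun do rewrite pairing0l; rewrite lqnorm0.
Qed.

Lemma has_sup_mass_p v :
  has_sup [set pairingV w v | w in [set w | comass_p p w <= 1]].
Proof.
split; first by exists (pairingV (fun _ _ => 0) v), (fun _ _ => 0); rewrite //= comass_p0.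
exists (\sum_i mass (v i)) => _ [w w_le1 <-]; apply: ler_sum => i _.
by apply: (mass_ge m_gt0); apply: le_trans (comass_le_comass_p w i) w_le1.
Qed.

Lemma mass_p_ge v w : comass_p p w <= 1 -> pairingV w v <= mass_p p v.
Proof. by move=> w_le1; apply: sup_upper_bound (has_sup_mass_p v) _ _; exists w. Qed.

Lemma mass_p_le_sum_mass v : mass_p p v <= \sum_i mass (v i).
Proof.
apply: ge_sup; first exact: (has_sup_mass_p v).1.
by move=> _ [w w_le1 <-]; apply: ler_sum => i _; apply: (mass_ge m_gt0);
  apply: le_trans (comass_le_comass_p w i) w_le1.
Qed.

Lemma weighted_mass_le_mass_p v a : (forall i, 0 <= a i) ->
  lqnorm (conjexp p) a <= 1 -> \sum_i a i * mass (v i) <= mass_p p v.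
Proof.
move=> a_ge0 a_le1; apply/ler_addgt0Pr => e e_gt0.
set A := \sum_i a i; have A_ge0 : 0 <= A by apply: sumr_ge0.
pose eps := e / (A + 1); have eps_gt0 : 0 < eps by rewrite divr_gt0 // ltr_wpDl.
have near_opt i : exists s : mcovec R m d,
    comass s <= 1 /\ mass (v i) - eps < pairing s (v i).
  have [_ [s s_le1 <-] s_opt] := sup_adherent eps_gt0 (has_sup_mass m_gt0 (v i)).
  by exists s.
have [s s_opt] := choice near_opt.
pose w : 'I_k -> mcovec R m d := fun i I => a i * s i I.
have w_le1 : comass_p p w <= 1.
  apply: comass_p_le => t ut; apply: le_trans a_le1; apply: ler_lqnorm => // i.
  rewrite /w pairingZl normrM ler_piMr //.
  exact: le_trans (comass_ge m_gt0 _ ut) (s_opt i).1.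
apply: le_trans _ (lerD (mass_p_ge v w w_le1) (lexx e)).
rewrite /pairingV /w; under [X in _ <= X + _]eq_bigr do rewrite pairingZl.
have -> : e = eps * (A + 1) by rewrite divfK // lt0r_neq0 // ltr_wpDl.
apply: le_trans (_ : _ <= \sum_i a i * pairing (s i) (v i) + eps * A) _.
  rewrite /A mulr_sumr -big_split /= ler_sum // => i _.
  by rewrite (mulrC eps) -mulrDr ler_wpM2l // -lerBlDr; exact/ltW/(s_opt i).2.
by rewrite lerD2l ler_wpM2l ?(ltW eps_gt0) // lerDl.
Qed.

Lemma lqnorm_mass_le_mass_p v : lqnorm p (fun i => mass (v i)) <= mass_p p v.
Proof.
apply: lqnorm_le_dual => // [i|a a_ge0 a_le1]; first exact: mass_ge0.
exact: weighted_mass_le_mass_p.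
Qed.

End VectorValued.

Theorem lemmaA6 (R : realType) (k m d : nat) (hk : (1 <= k)%N)
  (hm : (1 <= m)%N) (hmd : (m <= d)%N) (p : \bar R) (hp : (1 <= p)%E)
  (w : 'I_k -> mcovec R m d) (v : 'I_k -> mvec R m d) :
  [/\ (1 < p)%E -> forall q : R, conjexp p = q%:E ->
        \big[Num.max/0]_(i < k) comass (w i) <= comass_p p w /\
        comass_p p w <= (\sum_(i < k) comass (w i) `^ q) `^ q^-1,
      p = 1%E -> comass_p p w = \big[Num.max/0]_(i < k) comass (w i),
      forall r : R, p = r%:E ->
        (\sum_(i < k) enorm (v i) `^ r) `^ r^-1
          <= (\sum_(i < k) mass (v i) `^ r) `^ r^-1 /\
        (\sum_(i < k) mass (v i) `^ r) `^ r^-1 <= mass_p p v /\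
        mass_p p v <= \sum_(i < k) mass (v i)
    & p = +oo%E ->
        \big[Num.max/0]_(i < k) enorm (v i)
          <= \big[Num.max/0]_(i < k) mass (v i) /\
        \big[Num.max/0]_(i < k) mass (v i) <= mass_p p v /\
        mass_p p v <= \sum_(i < k) mass (v i)].
Proof.
have comass_w_ge0 i := comass_ge0 hm (w i).
have mass_v_ge0 i := mass_ge0 hm (v i).
have enorm_v_ge0 i := enorm_ge0 (v i).
have upper_comass := comass_p_le_lqnorm_comass hm hp w.
have lower_mass := lqnorm_mass_le_mass_p hm hp v.
have upper_mass := mass_p_le_sum_mass hm hp v.
have p_gt0 : (0 < p)%E := lt_le_trans lte01 hp.
have enorm_mass := lqnorm_enorm_le_lqnorm_mass hm v p_gt0.
split.
- move=> _ q q_def; split; first exact: bigmax_comass_le_comass_p.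
  by rewrite q_def lqnorm_fin in upper_comass.
- move=> p1; subst p; apply/le_anti; rewrite bigmax_comass_le_comass_p // andbT.
  by rewrite /conjexp eqxx lqnorm_pinfty in upper_comass.
- by move=> r p_def; subst p; rewrite !lqnorm_fin in lower_mass enorm_mass.
- by move=> p_oo; subst p; rewrite !lqnorm_pinfty in lower_mass enorm_mass.
Qed.
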